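(* Let $A$ be a finite set. The map $F:R^+(A)\to R(A)$, $F(\overset{x}{<},\overset{y}{<})=(\overset{x}{<},\overset{y}{<}\setminus\overset{x}{<})$, is an order-preserving map $(R^+(A),\subseteq)\to(R(A),\sqsubseteq)$; the map $G$ from the barycentric subdivision $\mathrm{sd}(R(A),\sqsubseteq)$ to $(R^+(A),\subseteq)$ sending a chain $\overset{*}{<}_0\sqsubsetneq\overset{*}{<}_1\sqsubsetneq\dots\sqsubsetneq\overset{*}{<}_r$ to $(\overset{x}{<}_r,\overset{y}{<}_0)$ is order-preserving; and the maps $|F|:|(R^+(A),\subseteq)|\to|(R(A),\sqsubseteq)|$ and the composite \[ |(R(A),\sqsubseteq)|\cong|\mathrm{sd}(R(A),\sqsubseteq)|\xrightarrow{|G|}|(R^+(A),\subseteq)| \] (the first map being the standard homeomorphism of a poset's realization with that of its barycentric subdivision) are mutually inverse $\Sigma_A$-equivariant homotopy equivalences.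
   Context: A strict partial order is a transitive irreflexive relation; it is semi-linear if it is induced by a surjection $h:A\to\{1,\dots,l\}$ (i.e. $a<b$ iff $h(a)<h(b)$). For strict partial orders $<_1,<_2$, $<_1\bar\cup<_2$ denotes the transitive closure of their union, and $a(<_1\setminus<_2)b$ means $a<_1b$ and neither $a<_2b$ nor $b<_2a$. A double order on $A$ is a pair $\overset{*}{<}=(\overset{x}{<},\overset{y}{<})$ of strict partial orders on $A$ such that for all $a\ne b$ at least one of $a\overset{x}{<}b$, $b\overset{x}{<}a$, $a\overset{y}{<}b$, $b\overset{y}{<}a$ holds. It is regular if $\overset{x}{<}$ is semi-linear and $a\overset{x}{<}b$ implies neither $a\overset{y}{<}b$ nor $b\overset{y}{<}a$. A double order is semi-regular if it equals the componentwise union $\bar\cup$ of finitely many regular double orders. $R(A)$, $R^+(A)$ are the sets of regular, resp. semi-regular double orders. Partial orders on double orders: $\overset{*}{<}_1\subseteq\overset{*}{<}_2$ iff $\overset{x}{<}_1\subseteq\overset{x}{<}_2$ and $\overset{y}{<}_1\subseteq\overset{y}{<}_2$; $\overset{*}{<}_1\sqsubseteq\overset{*}{<}_2$ iff $\overset{x}{<}_1\subseteq\overset{x}{<}_2$ and $\overset{y}{<}_1\supseteq\overset{y}{<}_2$. The barycentric subdivision $\mathrm{sd}(P)$ of a poset $P$ is the poset of finite nonempty chains in $P$ ordered by inclusion; $|P|$ is the realization of the nerve. $\Sigma_A$ acts on double orders by $(\overset{x}{<},\overset{y}{<})\sigma=(\overset{x}{<}\sigma,\overset{y}{<}\sigma)$,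 $a(\overset{x}{<}\sigma)b$ iff $\sigma(a)\overset{x}{<}\sigma(b)$ (similarly for $y$). *)

From HB Require Import structures.
From mathcomp Require Import all_boot all_order all_algebra all_fingroup.
From mathcomp Require Import all_classical all_reals all_analysis.
Set Implicit Arguments. Unset Strict Implicit. Unset Printing Implicit Defensive.
Import Order.TTheory GRing.Theory Num.Theory.

(* (a, b) \in r  means  a r b.                                            *)
Section DoubleOrders.
Variable A : finType.
Local Notation relA := {set A * A}.

Definition irreflexiveR (r : relA) := forall a, (a, a) \notin r.
Definition transitiveR (r : relA) :=
  forall a b c, (a, b) \in r -> (b, c) \in r -> (a, c) \in r.
Definition strict_po (r : relA) := irreflexiveR r /\ transitiveR r.

Definition semi_linear (r : relA) :=
  exists (l : nat) (h : A -> nat),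
    (forall a, 1 <= h a <= l)%N /\
    (forall k, (1 <= k <= l)%N -> exists a, h a = k) /\
    (forall a b, ((a, b) \in r) = (h a < h b)%N).

Definition tclos (r : relA) : relA :=
  [set p | [exists c, ((p.1, c) \in r) &&
                       connect (fun u v => (u, v) \in r) c p.2]].

Definition tunion (r1 r2 : relA) : relA := tclos (r1 :|: r2).

Definition rdiff (r1 r2 : relA) : relA :=
  [set p in r1 | ((p.1, p.2) \notin r2) && ((p.2, p.1) \notin r2)].

Definition dorder := (relA * relA)%type.

Definition is_double_order (o : dorder) :=
  strict_po o.1 /\ strict_po o.2 /\
  forall a b, a != b ->
    [|| (a, b) \in o.1, (b, a) \in o.1, (a, b) \in o.2 | (b, a) \in o.2].

Definition regular (o : dorder) :=
  is_double_order o /\ semi_linear o.1 /\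
  forall a b, (a, b) \in o.1 -> ((a, b) \notin o.2) && ((b, a) \notin o.2).

Definition big_tunion (s : seq dorder) : dorder :=
  (tclos (\bigcup_(o <- s) o.1), tclos (\bigcup_(o <- s) o.2)).

Definition semi_regular (o : dorder) :=
  is_double_order o /\
  exists s : seq dorder, (forall o', o' \in s -> regular o') /\ o = big_tunion s.

Definition dsub (o1 o2 : dorder) : bool := (o1.1 \subset o2.1) && (o1.2 \subset o2.2).
Definition dsq (o1 o2 : dorder) : bool := (o1.1 \subset o2.1) && (o2.2 \subset o1.2).

Definition Fmap (o : dorder) : dorder := (o.1, rdiff o.2 o.1).

Definition is_chain (T : finType) (le : rel T) (c : {set T}) : bool :=
  [forall u in c, forall v in c, le u v || le v u].

Definition sd_vertex (T : finType) (S : pred T) (le : rel T) (c : {set T}) :=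
  [&& (0 < #|c|)%N, c \subset S & is_chain le c].

Definition chain_top (c : {set dorder}) : dorder :=
  odflt (finset.set0, finset.set0) [pick m in c | [forall m' in c, dsq m' m]].
Definition chain_bot (c : {set dorder}) : dorder :=
  odflt (finset.set0, finset.set0) [pick m in c | [forall m' in c, dsq m m']].

Definition Gmap (c : {set dorder}) : dorder := ((chain_top c).1, (chain_bot c).2).

Definition ract (s : {perm A}) (r : relA) : relA := [set p | (s p.1, s p.2) \in r].
Definition dact (s : {perm A}) (o : dorder) : dorder := (ract s o.1, ract s o.2).
Definition chain_act (s : {perm A}) (c : {set dorder}) : {set dorder} := dact s @: c.

End DoubleOrders.

(* Geometric realization of a finite poset (S, le), S a subset of a      *)
(* finite type T: the points are the functions t : T -> R (barycentric    *)
(* coordinates) with t >= 0, support contained in S and a chain, and      *)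
(* total weight 1; it carries the subspace topology of the product        *)
(* topology on T -> R.                                                    *)
Import numFieldNormedType.Exports.
Local Open Scope ring_scope.
Local Open Scope classical_set_scope.

Notation rpoint R T := {ptws T -> R}.

Definition realization (R : realType) (T : finType) (S : pred T) (le : rel T)
  : set (rpoint R T) :=
  [set t | [/\ forall v, 0 <= t v,
               forall v, ~~ S v -> t v = 0,
               \sum_v t v = 1
             & forall v w, 0 < t v -> 0 < t w -> le v w || le w v]].

Definition realize (R : realType) (T T' : finType) (f : T -> T')
  (t : rpoint R T) : rpoint R T' :=
  fun w => \sum_(v | f v == w) t v.

(* the standard homeomorphism |P| -> |sd P|: a point t of |P| goes to the point
   of |sd P| giving to the chain c the weight
   #|c| * max(0, min_{v in c} t v - max_{v notin c} t v)
   (i.e. t = sum_j (v_j - v_{j+1}) 1_{c_j} over its superlevel sets c_j,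
   and 1_c = #|c| * barycenter(c)). *)
Definition minover (R : realType) (T : finType) (c : {set T}) (t : T -> R) : R :=
  \big[Order.min/1]_(v in c) t v.
Definition maxoutside (R : realType) (T : finType) (c : {set T}) (t : T -> R) : R :=
  \big[Order.max/0]_(v in ~: c) t v.

Definition sd_homeo (R : realType) (T : finType) (S : pred T) (le : rel T)
  (t : rpoint R T) : rpoint R {set T} :=
  fun c => if sd_vertex S le c then
             #|c|%:R * Order.max 0 (minover c t - maxoutside c t)
           else 0.

Definition pt_act (R : realType) (T : finType) (g : T -> T) (t : rpoint R T)
  : rpoint R T := fun v => t (g v).

Definition cont_on (R : realType) (T T' : finType) (X : set (rpoint R T))
  (f : rpoint R T -> rpoint R T') := {within X, continuous f}.

Definition homotopic (R : realType) (T T' : finType) (X : set (rpoint R T))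
  (Y : set (rpoint R T')) (f g : rpoint R T -> rpoint R T') :=
  exists H : R * rpoint R T -> rpoint R T',
    [/\ {within `[0, 1] `*` X, continuous H},
        forall s t, 0 <= s <= 1 -> X t -> Y (H (s, t)),
        forall t, X t -> H (0, t) = f t
      & forall t, X t -> H (1, t) = g t].

Definition equiv_homotopic (R : realType) (T : finType) (Gp : Type)
  (act : Gp -> T -> T) (X : set (rpoint R T)) (f g : rpoint R T -> rpoint R T) :=
  exists H : R * rpoint R T -> rpoint R T,
    [/\ {within `[0, 1] `*` X, continuous H},
        forall s t, 0 <= s <= 1 -> X t -> X (H (s, t)),
        forall t, X t -> H (0, t) = f t,
        forall t, X t -> H (1, t) = g t
      & forall sg s t, 0 <= s <= 1 -> X t ->
          H (s, pt_act (act sg) t) = pt_act (act sg) (H (s, t))].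

From Pilot Require Import Defs.
From HB Require Import structures.
From mathcomp Require Import all_boot all_order all_algebra all_fingroup.
From mathcomp Require Import all_classical all_reals all_analysis.
From mathcomp Require Import lra.
Import mathcomp.boot.fintype mathcomp.boot.finset.
Import Order.TTheory GRing.Theory Num.Theory.
Import numFieldNormedType.Exports.
Local Open Scope ring_scope.
Set Implicit Arguments. Unset Strict Implicit. Unset Printing Implicit Defensive.

(* F is well defined because the x-order of a semi-regular double order, the
   transitive closure of a union of semi-linear orders, is a weak order, and weak
   orders are semi-linear; G is well defined because along a chain of regular
   double orders (x_top, y_bot) is the union of the two ends of the chain.
   On realizations, |F| o |G| keeps each point t of |R(A)| in the closed simplex
   of the chain supporting t, so the straight-line homotopy joins it to the
   identity.  The image of a point v under |G| o |F| need not share a simplex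
   with v, but it lies below everything that lies above the support of v: the
   homotopy lets the mass of v flow back from the image, starting from the top of
   the chain supporting v.  All constructions commute with relabellings of A. *)

Section Relations.
Variable A : finType.
Implicit Types r : {set A * A}.

Lemma tclos_sub r : r \subset tclos r.
Proof.
apply/subsetP => -[a b] ab; rewrite inE; apply/existsP; exists b.
by rewrite ab connect0.
Qed.

Lemma tclos_id r : transitiveR r -> tclos r = r.
Proof.
move=> trr; apply/setP => -[a b]; apply/idP/idP => [|ab]; last first.
  by rewrite (subsetP (tclos_sub r) _ ab).
rewrite inE => /existsP[c /andP[ac /connectP[p]]] /=.
elim: p a c ac => [|d p IHp] a c ac /=; first by move=> _ ->.
by case/andP=> cd pd bE; apply: IHp (trr _ _ _ ac cd) pd bE.
Qed.

Definition negatively_transitive r :=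
  forall a b c, (a, c) \in r -> ((a, b) \in r) || ((b, c) \in r).

Lemma negatively_transitive_tclos r :
  negatively_transitive r -> negatively_transitive (tclos r).
Proof.
move=> ntr a b c; rewrite inE => /existsP[d /andP[ad dc]].
case/orP: (ntr a b d ad) => [ab | bd]; first by rewrite (subsetP (tclos_sub r) _ ab).
by apply/orP; right; rewrite inE; apply/existsP; exists d; rewrite bd.
Qed.

Lemma negatively_transitive_setU r1 r2 :
  negatively_transitive r1 -> negatively_transitive r2 ->
  negatively_transitive (r1 :|: r2).
Proof.
move=> nt1 nt2 a b c; rewrite !inE.
by case/orP=> [/(nt1 a b c) | /(nt2 a b c)] /orP[] ->; rewrite ?orbT.
Qed.

Lemma negatively_transitive_bigcup (I : eqType) (s : seq I) (F : I -> {set A * A}) :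
  {in s, forall i, negatively_transitive (F i)} ->
  negatively_transitive (\bigcup_(i <- s) F i).
Proof.
elim: s => [_|i s IHs ntF]; first by rewrite big_nil => a b c; rewrite inE.
rewrite big_cons; apply: negatively_transitive_setU; first exact/ntF/mem_head.
by apply: IHs => j sj; apply/ntF; rewrite inE sj orbT.
Qed.

Lemma semi_linear_negatively_transitive r :
  semi_linear r -> negatively_transitive r.
Proof.
move=> [l [h [_ [_ rE]]]] a b c; rewrite !rE => ac.
by case: ltnP => // hba; apply: leq_ltn_trans hba ac.
Qed.

Definition predecessors r (a : A) : {set A} := [set b | (b, a) \in r].

Lemma predecessors_proper r a b :
  strict_po r -> (a, b) \in r -> predecessors r a \proper predecessors r b.
Proof.
move=> [irr trr] ab; apply/properP; split.
  by apply/subsetP => c; rewrite !inE => ca; apply: trr ca ab.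
by exists a; rewrite !inE ?irr.
Qed.

Lemma predecessors_subset r a b :
  negatively_transitive r -> (a, b) \notin r -> predecessors r b \subset predecessors r a.
Proof.
move=> ntr nab; apply/subsetP => c; rewrite !inE => cb.
by case/orP: (ntr c a b cb) => // ab; rewrite ab in nab.
Qed.

(* Rank [a] by the number of predecessor sets contained in its own.  For a weak
   order these sets form a chain, so the rank is injective on them and hence onto
   [1, #|D|]. *)
Lemma weak_order_semi_linear r :
  strict_po r -> negatively_transitive r -> semi_linear r.
Proof.
move=> por ntr; pose D := [set predecessors r b | b : A].
pose rk (d : {set A}) := #|[set d' in D | d' \subset d]|.
have inD b : predecessors r b \in D by apply: imset_f.
have rk_gt0 b : (0 < rk (predecessors r b))%N.
  by apply/card_gt0P; exists (predecessors r b); rewrite !inE inD subxx.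
have rk_le d : (rk d <= #|D|)%N.
  by apply/subset_leq_card/subsetP => d'; rewrite inE => /andP[].
have rkE a b : ((a, b) \in r) = (rk (predecessors r a) < rk (predecessors r b))%N.
  apply/idP/idP => [ab | ].
    have /andP[sab nsba] := predecessors_proper por ab.
    apply: proper_card; apply/properP; split.
      apply/subsetP => d; rewrite !inE => /andP[-> da].
      exact: subset_trans da sab.
    by exists (predecessors r b); rewrite !inE inD /= ?subxx.
  apply: contraTT => nab; rewrite -leqNgt; apply/subset_leq_card/subsetP => d.
  rewrite !inE => /andP[-> db]; exact: subset_trans db (predecessors_subset ntr nab).
have rk_inj : {in enum D &, injective rk}.
  move=> d1 d2; rewrite !mem_enum => /imsetP[a _ ->] /imsetP[b _ ->] eq_rk.
  case ab: ((a, b) \in r); first by rewrite rkE eq_rk ltnn in ab.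
  case ba: ((b, a) \in r); first by rewrite rkE eq_rk ltnn in ba.
  by apply/setP/subset_eqP; rewrite !predecessors_subset ?ab ?ba.
exists #|D|, (fun a => rk (predecessors r a)); split; [|split] => // [a | k].
  by rewrite rk_gt0 rk_le.
have rk_uniq : uniq (map rk (enum D)) by rewrite map_inj_in_uniq ?enum_uniq.
have rk_sub : {subset map rk (enum D) <= iota 1 #|D|}.
  move=> n /mapP[d /[!mem_enum] /imsetP[b _ ->] ->].
  by rewrite mem_iota add1n ltnS rk_gt0 rk_le.
have [|_ rk_onto] := uniq_min_size rk_uniq rk_sub.
  by rewrite size_map size_iota -cardE.
move=> kD; have : k \in iota 1 #|D| by rewrite mem_iota add1n ltnS.
by rewrite -rk_onto => /mapP[d /[!mem_enum] /imsetP[a _ ->] ->]; exists a.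
Qed.

End Relations.

(* A maximum of [c] is an element with the most elements of [c] below it; note
   that [le] is reflexive on a chain. *)
Lemma chain_max (T : finType) (le : rel T) (c : {set T}) :
  transitive le -> is_chain le c -> (0 < #|c|)%N ->
  exists2 m, m \in c & {in c, forall x, le x m}.
Proof.
move=> trle /forall_inP chc /card_gt0P[x0 x0c].
pose below m := #|[set x in c | le x m]|.
have [m mc below_max] := arg_maxnP below x0c.
exists m => // x xc; apply: contraT => nxm.
have mx : le m x by have /forall_inP/(_ m mc) := chc x xc; rewrite (negbTE nxm).
have := below_max x xc; rewrite /= leqNgt => /negP[]; apply: proper_card.
apply/properP; split.
  by apply/subsetP => y; rewrite !inE => /andP[-> ym]; apply: trle ym mx.
exists x; rewrite !inE ?xc ?nxm //=.
by have /forall_inP/(_ x xc) := chc x xc; rewrite orbb.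
Qed.

Lemma chain_min (T : finType) (le : rel T) (c : {set T}) :
  transitive le -> is_chain le c -> (0 < #|c|)%N ->
  exists2 m, m \in c & {in c, forall x, le m x}.
Proof.
move=> trle /forall_inP chc; apply: (@chain_max _ (fun x y => le y x)).
  by move=> y x z yx zy; apply: trle zy yx.
apply/forall_inP => u uc; apply/forall_inP => v vc.
by rewrite orbC; have /forall_inP := chc u uc; apply.
Qed.

Section DoubleOrders.
Variable A : finType.
Implicit Types (o : dorder A) (c : {set dorder A}).
Local Notation regular_pred := (fun o : dorder A => `[< regular o >]).

Lemma rdiffE (r1 r2 : {set A * A}) a b :
  ((a, b) \in rdiff r1 r2) = [&& (a, b) \in r1, (a, b) \notin r2 & (b, a) \notin r2].
Proof. by rewrite inE. Qed.

Lemma rdiff_sub (r1 r2 : {set A * A}) : rdiff r1 r2 \subset r1.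
Proof. by apply/subsetP => p; rewrite inE => /andP[]. Qed.

Lemma semi_regular_negatively_transitive o :
  semi_regular o -> negatively_transitive o.1.
Proof.
move=> [_ [s [sreg ->]]]; apply/negatively_transitive_tclos.
apply: negatively_transitive_bigcup => o' /sreg[_ [sl _]].
exact: semi_linear_negatively_transitive.
Qed.

Lemma Fmap_regular_of_weak o :
  is_double_order o -> negatively_transitive o.1 -> regular (Fmap o).
Proof.
case: o => X Y [[irrX trX] [[irrY trY] tot]] ntX /=.
have trD : transitiveR (rdiff Y X).
  move=> a b c; rewrite !rdiffE => /and3P[ab nab nba] /and3P[bc nbc ncb].
  rewrite (trY _ _ _ ab bc) /=; apply/andP; split; apply/negP => H.
    by case/orP: (ntX a b c H) => H'; [rewrite H' in nab | rewrite H' in nbc].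
  by case/orP: (ntX c b a H) => H'; [rewrite H' in ncb | rewrite H' in nba].
split; [split; [by [] | split] | split].
- by split => // a; rewrite rdiffE (negbTE (irrY a)).
- move=> a b neq; move: (tot a b neq); rewrite !rdiffE /=.
  by case: ((a, b) \in X); case: ((b, a) \in X); rewrite /= ?andbT.
- exact: weak_order_semi_linear.
- by move=> a b ab; rewrite !rdiffE ab /= !andbF.
Qed.

Lemma Fmap_regular o : semi_regular o -> regular (Fmap o).
Proof.
move=> oR; apply: Fmap_regular_of_weak; first by case: oR.
exact: semi_regular_negatively_transitive.
Qed.

Lemma Fmap_mono o1 o2 :
  is_double_order o1 -> strict_po o2.2 -> dsub o1 o2 -> dsq (Fmap o1) (Fmap o2).
Proof.
move=> [_ [_ tot1]] [irr2 tr2] /andP[s1 s2]; rewrite /dsq /= s1 /=.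
apply/subsetP => -[a b]; rewrite !rdiffE => /and3P[ab nab nba].
have nab1 : (a, b) \notin o1.1 by apply: contra nab; apply: (subsetP s1).
have nba1 : (b, a) \notin o1.1 by apply: contra nba; apply: (subsetP s1).
rewrite nab1 nba1 !andbT.
have neq : a != b by apply: contraTneq ab => ->; apply: irr2.
move: (tot1 a b neq); rewrite (negbTE nab1) (negbTE nba1) /= => /orP[// | ba].
by have := irr2 a; rewrite (tr2 _ _ _ ab (subsetP s2 _ ba)).
Qed.

Lemma dsq_trans : transitive (@dsq A).
Proof.
move=> o2 o1 o3 /andP[h1 h2] /andP[h3 h4].
by rewrite /dsq (subset_trans h1 h3) (subset_trans h4 h2).
Qed.

Lemma dsq_anti : antisymmetric (@dsq A).
Proof.
move=> [x1 y1] [x2 y2] /andP[/andP[h1 h2] /andP[h3 h4]] /=.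
by congr pair; apply/setP/subset_eqP; rewrite ?h1 ?h2 ?h3 ?h4.
Qed.

Lemma dsub_refl : reflexive (@dsub A).
Proof. by move=> o; rewrite /dsub !subxx. Qed.

Lemma dsub_trans : transitive (@dsub A).
Proof.
move=> o2 o1 o3 /andP[h1 h2] /andP[h3 h4].
by rewrite /dsub (subset_trans h1 h3) (subset_trans h2 h4).
Qed.

Lemma chain_top_eq c m : m \in c -> {in c, forall m', dsq m' m} -> chain_top c = m.
Proof.
move=> mc m_top; rewrite /chain_top; case: pickP => [m' /andP[m'c /forall_inP m'_top] | ].
  by apply: dsq_anti; rewrite m_top ?m'_top.
by move/(_ m); rewrite mc => /negbT/negP[]; apply/forall_inP.
Qed.

Lemma chain_bot_eq c m : m \in c -> {in c, forall m', dsq m m'} -> chain_bot c = m.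
Proof.
move=> mc m_bot; rewrite /chain_bot; case: pickP => [m' /andP[m'c /forall_inP m'_bot] | ].
  by apply: dsq_anti; rewrite m_bot ?m'_bot.
by move/(_ m); rewrite mc => /negbT/negP[]; apply/forall_inP.
Qed.

Lemma chain_topP (S : pred (dorder A)) c : sd_vertex S (@dsq A) c ->
  chain_top c \in c /\ {in c, forall m, dsq m (chain_top c)}.
Proof.
case/and3P=> c_gt0 _ chc; have [m mc m_top] := chain_max dsq_trans chc c_gt0.
by rewrite (chain_top_eq mc m_top).
Qed.

Lemma chain_botP (S : pred (dorder A)) c : sd_vertex S (@dsq A) c ->
  chain_bot c \in c /\ {in c, forall m, dsq (chain_bot c) m}.
Proof.
case/and3P=> c_gt0 _ chc; have [m mc m_bot] := chain_min dsq_trans chc c_gt0.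
by rewrite (chain_bot_eq mc m_bot).
Qed.

Lemma sd_vertex_regular c m : sd_vertex regular_pred (@dsq A) c -> m \in c -> regular m.
Proof. by case/and3P=> _ /subsetP cR _ /cR/asboolP. Qed.

(* Along a chain the bottom has the smaller x-order and the larger y-order, so
   (x_top, y_bot) is the union of the two regular double orders at the ends. *)
Lemma Gmap_semi_regular c :
  sd_vertex regular_pred (@dsq A) c -> semi_regular (Gmap c).
Proof.
move=> cv; have [tc _] := chain_topP cv; have [bc b_bot] := chain_botP cv.
have /andP[bt1 bt2] := b_bot _ tc.
have [[spoT _] _] := sd_vertex_regular cv tc.
have [[_ [spoB totB]] _] := sd_vertex_regular cv bc.
split.
  split=> //; split=> // a b neq.
  case/or4P: (totB a b neq) => [ab|ba|->|->]; rewrite ?orbT //.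
    by rewrite (subsetP bt1 _ ab).
  by rewrite (subsetP bt1 _ ba) orbT.
exists [:: chain_top c; chain_bot c]; split.
  move=> o; rewrite !inE => /orP[] /eqP->.
    exact: sd_vertex_regular cv tc.
  exact: sd_vertex_regular cv bc.
rewrite /big_tunion !big_cons !big_nil !setU0 (setUidPl bt1) (setUidPr bt2).
by rewrite (tclos_id spoT.2) (tclos_id spoB.2).
Qed.

Lemma Gmap_mono c1 c2 :
  sd_vertex regular_pred (@dsq A) c1 -> sd_vertex regular_pred (@dsq A) c2 ->
  c1 \subset c2 -> dsub (Gmap c1) (Gmap c2).
Proof.
move=> v1 v2 /subsetP s12.
have [tc1 _] := chain_topP v1; have [bc1 _] := chain_botP v1.
have [_ top2] := chain_topP v2; have [_ bot2] := chain_botP v2.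
have /andP[h1 _] := top2 _ (s12 _ tc1); have /andP[_ h2] := bot2 _ (s12 _ bc1).
by rewrite /dsub /Gmap /= h1 h2.
Qed.

Lemma regular_sep o a b : regular o -> (a, b) \in o.2 ->
  ((a, b) \notin o.1) && ((b, a) \notin o.1).
Proof.
by case=> _ [_ sep] ab; apply/andP; split; apply: contraL ab => /sep/andP[].
Qed.

(* [Fmap (Gmap c)] is [(x_top, y_bot \ x_top)]; it lies on the same side of [o]
   as the top of [c]. *)
Lemma Fmap_Gmap_comparable c o :
  sd_vertex regular_pred (@dsq A) c -> regular o ->
  {in c, forall m, dsq m o || dsq o m} ->
  dsq (Fmap (Gmap c)) o || dsq o (Fmap (Gmap c)).
Proof.
move=> cv ro c_cmp; have [tc _] := chain_topP cv; have [bc b_bot] := chain_botP cv.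
have [[_ [[irrB trB] _]] _] := sd_vertex_regular cv bc.
have /andP[_ tb2] := b_bot _ tc.
rewrite /Gmap /Fmap /dsq /=; case/orP: (c_cmp _ tc) => /andP[t1o o2t].
  apply/orP; left; rewrite t1o; apply/subsetP => -[a b] ab; rewrite rdiffE.
  have /andP[nab nba] := regular_sep ro ab.
  rewrite (subsetP tb2 _ (subsetP o2t _ ab)) /=.
  by apply/andP; split; apply: contra (subsetP t1o _) _.
apply/orP; right; rewrite t1o; apply/subsetP => -[a b].
rewrite rdiffE => /and3P[ab nab nba].
have neq : a != b by apply: contraTneq ab => ->; apply: irrB.
have [[_ [_ tot]] _] := ro.
case/or4P: (tot a b neq) => [ab1 | ba1 | // | ba].
- by move: nab; rewrite (subsetP t1o _ ab1).
- by move: nba; rewrite (subsetP t1o _ ba1).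
- case/orP: (c_cmp _ bc) => /andP[_ sub2]; last exact: subsetP sub2 _ ab.
  by have := irrB a; rewrite (trB _ _ _ ab (subsetP sub2 _ ba)).
Qed.

End DoubleOrders.

Section Action.
Variable A : finType.
Implicit Types (s : {perm A}) (o : dorder A) (c : {set dorder A}).
Local Notation regular_pred := (fun o : dorder A => `[< regular o >]).

Lemma in_ract s (r : {set A * A}) a b : ((a, b) \in Defs.ract s r) = ((s a, s b) \in r).
Proof. by rewrite inE. Qed.

Lemma ract_subset s (r1 r2 : {set A * A}) :
  (Defs.ract s r1 \subset Defs.ract s r2) = (r1 \subset r2).
Proof.
apply/subsetP/subsetP => sub12 [a b]; last by rewrite !in_ract; apply: sub12.
by move/(_ (s^-1 a, s^-1 b)%g): sub12; rewrite !in_ract !permKV.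
Qed.

Lemma dsq_act s o1 o2 : dsq (dact s o1) (dact s o2) = dsq o1 o2.
Proof. by rewrite /dsq /= !ract_subset. Qed.

Lemma dsub_act s o1 o2 : dsub (dact s o1) (dact s o2) = dsub o1 o2.
Proof. by rewrite /dsub /= !ract_subset. Qed.

Lemma dactK s : cancel (dact s) (dact s^-1).
Proof. by move=> [x y]; congr pair; apply/setP => -[a b]; rewrite !in_ract !permKV. Qed.

Lemma dact_inj s : injective (dact s).
Proof. exact: can_inj (dactK s). Qed.

Lemma Fmap_act s o : Fmap (dact s o) = dact s (Fmap o).
Proof. by congr pair; apply/setP => -[a b]; rewrite rdiffE !in_ract rdiffE. Qed.

Lemma regular_act s o : regular o -> regular (dact s o).
Proof.
case: o => x y [[[irrx trx] [[irry try] tot]] [[l [h [h_range [h_onto xE]]]] sep]].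
split; [split; [split | split; [split |]] | split] => /=.
- by move=> a; rewrite in_ract.
- by move=> a b c; rewrite !in_ract; apply: trx.
- by move=> a; rewrite in_ract.
- by move=> a b c; rewrite !in_ract; apply: try.
- by move=> a b neq; rewrite !in_ract; apply/tot; rewrite (inj_eq perm_inj).
- exists l, (h \o s); split=> [a | ]; first exact: h_range.
  split=> [k /h_onto[a ha] | a b]; last by rewrite in_ract xE.
  by exists (s^-1 a)%g; rewrite /= permKV.
- by move=> a b; rewrite !in_ract; apply: sep.
Qed.

Lemma regular_actE s o : regular (dact s o) <-> regular o.
Proof. by split=> [/(regular_act s^-1) | /(regular_act s)]; rewrite ?dactK. Qed.

Lemma Gmap_act s c : sd_vertex regular_pred (@dsq A) c ->
  Gmap (dact s @: c) = dact s (Gmap c).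
Proof.
move=> cv; have [tc c_top] := chain_topP cv; have [bc c_bot] := chain_botP cv.
rewrite /Gmap (@chain_top_eq _ _ (dact s (chain_top c))) ?imset_f //; last first.
  by move=> d /imsetP[m mc ->]; rewrite dsq_act c_top.
rewrite (@chain_bot_eq _ _ (dact s (chain_bot c))) ?imset_f //.
by move=> d /imsetP[m mc ->]; rewrite dsq_act c_bot.
Qed.

End Action.

Section Realization.
Variable R : realType.

Definition cone (T : finType) (S : pred T) (le : rel T) (v : T -> R) :=
  [/\ forall w, 0 <= v w, forall w, ~~ S w -> v w = 0
    & forall a b, 0 < v a -> 0 < v b -> le a b || le b a].

Lemma realizationP (T : finType) (S : pred T) (le : rel T) (t : rpoint R T) :
  realization S le t <-> cone S le t /\ \sum_w t w = 1.
Proof. by split=> [[t0 tS t1 tch] | [[t0 tS tch] t1]]. Qed.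

Lemma cone_le1 (T : finType) (S : pred T) (le : rel T) (v : T -> R) :
  cone S le v -> \sum_w v w <= 1 -> forall w, v w <= 1.
Proof.
by case=> v0 _ _ v_le1 w; rewrite (le_trans _ v_le1) // (bigD1 w) //= lerDl sumr_ge0.
Qed.

Section Realize.
Variables (T T' : finType) (f : T -> T').
Implicit Types (v : rpoint R T).

Lemma realize_sum v : \sum_w realize f v w = \sum_a v a.
Proof.
rewrite /realize (exchange_big_dep xpredT) //=; apply: eq_bigr => a _.
by rewrite (big_pred1 (f a)) // => w; rewrite /= eq_sym.
Qed.

Lemma realize_gt0 v w :
  (forall a, 0 <= v a) -> 0 < realize f v w -> exists2 a, f a = w & 0 < v a.
Proof.
move=> v0 /lt0r_neq0/eqP fv_neq0.
by have [a /andP[/eqP <- va]] := psumr_neq0P (fun a _ => v0 a) fv_neq0; exists a.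
Qed.

Lemma realize_cone (S : pred T) (le : rel T) (S' : pred T') (le' : rel T') v :
  (forall a, S a -> S' (f a)) -> (forall a b, S a -> S b -> le a b -> le' (f a) (f b)) ->
  cone S le v -> cone S' le' (realize f v).
Proof.
move=> fS fle [v0 vS vch].
have suppS a : 0 < v a -> S a by apply: contraTT => /vS ->; rewrite ltxx.
split=> [w | w nS' | _ _ /(realize_gt0 v0)[a <- va] /(realize_gt0 v0)[b <- vb]].
- exact: sumr_ge0.
- apply/eqP; rewrite eq_le sumr_ge0 // andbT leNgt; apply/negP.
  by case/(realize_gt0 v0) => a fa /suppS/fS; rewrite fa (negbTE nS').
- have [Sa Sb] := (suppS a va, suppS b vb).
  by case/orP: (vch a b va vb) => [ab | ba]; [rewrite fle | rewrite (fle b a) ?orbT].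
Qed.

Lemma realize_pt_act (g : T -> T) (g' : T' -> T') v :
  injective g -> injective g' -> (forall a, v (g a) != 0 -> f (g a) = g' (f a)) ->
  realize f (pt_act g v) = pt_act g' (realize f v).
Proof.
move=> g_inj g'_inj fg; apply: funext => w; rewrite /realize /pt_act.
rewrite [RHS](reindex_inj g_inj) [LHS]big_mkcond [RHS]big_mkcond; apply: eq_bigr => a _.
have [-> | vga] := eqVneq (v (g a)) 0; first by rewrite !if_same.
by rewrite fg // (inj_eq g'_inj).
Qed.

End Realize.

Section Subdivision.
Variable T : finType.
Implicit Types (v : T -> R) (c : {set T}).

Lemma minover_le c v u : u \in c -> minover c v <= v u.
Proof. exact: bigmin_le_cond. Qed.

Lemma maxoutside_ge c v u : u \notin c -> v u <= maxoutside c v.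
Proof. by move=> uc; apply: le_bigmax_cond; rewrite inE. Qed.

Lemma maxoutside_ge0 c v : 0 <= maxoutside c v.
Proof. exact: bigmax_ge_id. Qed.

Lemma minover_attained c v : (forall u, v u <= 1) -> (0 < #|c|)%N ->
  exists2 u, u \in c & minover c v = v u.
Proof.
move=> v_le1 /card_gt0P[u0 u0c].
by have [u uc uE] := eq_bigmin u0 (fun u => u \in c) v u0c (fun u _ => v_le1 u); exists u.
Qed.

Lemma maxoutside_attained c v :
  maxoutside c v = 0 \/ exists2 u, u \notin c & maxoutside c v = v u.
Proof.
apply: (big_ind (fun x => x = 0 \/ exists2 u, u \notin c & x = v u)) => [| x y | u].
- by left.
- by rewrite /Order.max; case: ifP.
- by rewrite inE; right; exists u.
Qed.

(* [gap c v] is the length of the set of levels [0 <= l < 1] whose superlevel set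
   [[set u | v u > l]] is [c] (the bounds are the neutral elements of [minover]
   and [maxoutside]); summing it over the [c] containing [w] thus gives [v w]
   when [v] takes values in [0, 1]. *)
Definition gap c v := Order.max 0 (minover c v - maxoutside c v).

Lemma gap_ge0 c v : 0 <= gap c v.
Proof. by rewrite /gap le_max lexx. Qed.

Lemma gap_gt0 c v : (0 < gap c v) = (maxoutside c v < minover c v).
Proof. by rewrite /gap lt_max ltxx subr_gt0. Qed.

Lemma gap_eq0 c v u : u \in c -> v u <= 0 -> gap c v = 0.
Proof.
move=> uc vu; apply/max_idPl; rewrite subr_le0.
exact: le_trans (minover_le v uc) (le_trans vu (maxoutside_ge0 c v)).
Qed.

Lemma gap_gt0_sep c v u u' : 0 < gap c v -> u \in c -> u' \notin c -> v u' < v u.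
Proof.
rewrite gap_gt0 => gapc uc u'c.
exact: le_lt_trans (maxoutside_ge v u'c) (lt_le_trans gapc (minover_le v uc)).
Qed.

Lemma gap_gt0_pos c v u : 0 < gap c v -> u \in c -> 0 < v u.
Proof.
rewrite gap_gt0 => gapc uc.
exact: le_lt_trans (maxoutside_ge0 c v) (lt_le_trans gapc (minover_le v uc)).
Qed.


Lemma gap_sublevel v (U c : {set T}) (m : R) :
  (forall u, 0 <= v u) -> (forall u, v u <= 1) -> 0 < m ->
  (forall u, u \notin U -> v u = 0) -> {in U, forall u, m <= v u} ->
  (0 < #|c|)%N -> c != U ->
  gap c (fun u => if u \in U then v u - m else 0) = gap c v.
Proof.
move=> v0 v_le1 m_gt0 vU0 mU c_gt0 cU; set v' := fun u => _.
have [cU_sub | /subsetPn[u uc uU]] := boolP (c \subset U); last first.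
  rewrite (gap_eq0 uc (_ : v u <= 0)) ?vU0 //.
  by apply: (gap_eq0 uc); rewrite /v' (negbTE uU).
have [_ [u1 u1U u1c]] : c \subset U /\ exists2 u, u \in U & u \notin c.
  by apply/properP; rewrite properEneq cU cU_sub.
have v'_le1 u : v' u <= 1 by rewrite /v'; case: ifP => // /mU; have := v_le1 u; lra.
have minE : minover c v' = minover c v - m.
  have [a ac aE] := minover_attained v_le1 c_gt0.
  have [b bc bE] := minover_attained v'_le1 c_gt0.
  have := minover_le v' ac; have := minover_le v bc.
  by rewrite aE bE /v' (subsetP cU_sub _ ac) (subsetP cU_sub _ bc); lra.
have [M Mc ME] : exists2 u, u \notin c & maxoutside c v = v u.
  case: (maxoutside_attained c v) => // max0.
  by have := maxoutside_ge v u1c; have := mU _ u1U; lra.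
have MU : M \in U.
  by apply: contraT => /vU0 vM0; have := maxoutside_ge v u1c; have := mU _ u1U; lra.
have maxE : maxoutside c v' = maxoutside c v - m.
  apply/eqP; rewrite eq_le; apply/andP; split; last first.
    by have := maxoutside_ge v' Mc; rewrite /v' MU ME.
  case: (maxoutside_attained c v') => [-> | [u' u'c ->]]; first by have := mU _ MU; lra.
  rewrite /v'; case: ifP => u'U; last by have := mU _ MU; lra.
  by have := maxoutside_ge v u'c; lra.
by rewrite /gap minE maxE; congr Order.max; lra.
Qed.

(* Induction on the support [U] of [v]: [gap U v] is the minimum [m] of [v] on
   [U], and lowering [v] by [m] on [U] keeps the other gaps and shrinks [U]. *)
Lemma sum_gap v (w : T) : (forall u, 0 <= v u) -> (forall u, v u <= 1) ->
  \sum_(c : {set T} | w \in c) gap c v = v w.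
Proof.
have [n] := ubnP #|[set u | 0 < v u]|; elim: n v w => // n IHn v w supp_lt v0 v_le1.
have [vw_gt0 | vw_le0] := ltP 0 (v w); last first.
  by rewrite big1 => [|c wc]; [apply/le_anti; rewrite v0 | apply: gap_eq0 wc vw_le0].
pose U := [set u | 0 < v u]; have inU u : (u \in U) = (0 < v u) by rewrite /U inE.
have wU : w \in U by rewrite inU.
have U_gt0 : (0 < #|U|)%N by apply/card_gt0P; exists w.
have [u0 u0U mE] := minover_attained v_le1 U_gt0.
set m := minover U v in mE.
have m_gt0 : 0 < m by rewrite mE -inU.
have mU : {in U, forall u, m <= v u} by move=> u uU; apply: minover_le.
have vU0 u : u \notin U -> v u = 0.
  by rewrite inU -leNgt => vu_le0; apply/le_anti; rewrite vu_le0 v0.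
pose v' u := if u \in U then v u - m else 0.
have v'0 u : 0 <= v' u by rewrite /v'; case: ifP => // /mU; lra.
have v'_le1 u : v' u <= 1 by rewrite /v'; case: ifP => // _; have := v_le1 u; lra.
have v'w : v' w = v w - m by rewrite /v' wU.
have supp'_lt : (#|[set u | (0 < v' u)%R]| < n)%N.
  rewrite ltnS in supp_lt; apply: leq_trans supp_lt; apply: proper_card.
  apply/properP; split.
    apply/subsetP => u; rewrite !inE /v'.
    by case: ifP => [uU _ | _]; [rewrite -inU | rewrite ltxx].
  exists u0; first by rewrite inE -inU.
  by rewrite inE /v' u0U -mE subrr ltxx.
have gapU : gap U v = m.
  rewrite /gap; have -> : maxoutside U v = 0.
    by case: (maxoutside_attained U v) => // -[u /vU0 <-].
  by rewrite subr0; apply/max_idPr/ltW.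
have gapU' : gap U v' = 0 by apply: (gap_eq0 u0U); rewrite /v' u0U -mE subrr.
have sumE : \sum_(c : {set T} | (w \in c) && (c != U)) gap c v =
            \sum_(c : {set T} | (w \in c) && (c != U)) gap c v'.
  apply: eq_bigr => c /andP[wc cU]; rewrite gap_sublevel //.
  by apply/card_gt0P; exists w.
have IH' := IHn v' w supp'_lt v'0 v'_le1.
rewrite (bigD1 U) //= gapU' add0r v'w -sumE in IH'.
by rewrite (bigD1 U) //= gapU IH'; lra.
Qed.

End Subdivision.
End Realization.

Section SdHomeo.
Variables (R : realType) (T : finType) (S : pred T) (le : rel T).
Implicit Types (t : rpoint R T) (c : {set T}).

Lemma sd_homeoE t c :
  sd_homeo S le t c = if sd_vertex S le c then #|c|%:R * gap c t else 0.
Proof. by []. Qed.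

Lemma sd_homeo_ge0 t c : 0 <= sd_homeo S le t c.
Proof. by rewrite sd_homeoE; case: ifP => // _; rewrite mulr_ge0 ?gap_ge0. Qed.

Lemma sd_homeo_gt0 t c : 0 < sd_homeo S le t c -> sd_vertex S le c /\ 0 < gap c t.
Proof.
rewrite sd_homeoE; case: ifP => [cv | _]; last by rewrite ltxx.
by case/and3P: (cv) => c_gt0 _ _; rewrite pmulr_rgt0 ?ltr0n.
Qed.

Lemma sd_homeo_cone t :
  cone (sd_vertex S le) (fun c1 c2 => c1 \subset c2) (sd_homeo S le t).
Proof.
split=> [c | c ncv | c1 c2 /sd_homeo_gt0[_ gap1] /sd_homeo_gt0[_ gap2]].
- exact: sd_homeo_ge0.
- by rewrite sd_homeoE (negbTE ncv).
- apply/orP; case: (boolP (c1 \subset c2)) => [| /subsetPn[u1 u1c1 u1c2]]; first by left.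
  right; apply/subsetP => u2 u2c2; apply: contraT => u2c1.
  have := lt_trans (gap_gt0_sep gap1 u1c1 u2c1) (gap_gt0_sep gap2 u2c2 u1c2).
  by rewrite ltxx.
Qed.

Lemma sd_homeo_sum t : cone S le t -> (forall w, t w <= 1) ->
  \sum_c sd_homeo S le t c = \sum_w t w.
Proof.
move=> [t0 tS tch] t_le1.
have sdhE c : sd_homeo S le t c = #|c|%:R * gap c t.
  rewrite sd_homeoE; case: ifPn => // ncv.
  have [/gap_gt0_pos tc_gt0 | gap_le0] := ltP 0 (gap c t); last first.
    by rewrite (_ : gap c t = 0) ?mulr0 //; apply/le_anti; rewrite gap_le0 gap_ge0.
  have [-> | c_gt0] := posnP #|c|; first by rewrite mul0r.
  case/negP: ncv; apply/and3P; split=> //.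
    by apply/subsetP => u /tc_gt0; apply: contraTT => /tS ->; rewrite ltxx.
  by apply/forall_inP => u uc; apply/forall_inP => u' u'c; apply: tch; apply: tc_gt0.
rewrite (eq_bigr (fun c => \sum_w if w \in c then gap c t else 0)) => [|c _]; last first.
  by rewrite sdhE -big_mkcond sumr_const mulr_natl.
by rewrite exchange_big; apply: eq_bigr => w _; rewrite -big_mkcond sum_gap.
Qed.

Lemma sd_vertex_imset (g : T -> T) c :
  injective g -> (forall a, S (g a) = S a) -> (forall a b, le (g a) (g b) = le a b) ->
  sd_vertex S le (g @: c) = sd_vertex S le c.
Proof.
move=> g_inj gS gle; rewrite /sd_vertex (card_imset _ g_inj).
have -> : (g @: c \subset S) = (c \subset S).
  apply/subsetP/subsetP => cS a.
    by move=> ac; have := cS _ (imset_f g ac); rewrite !unfold_in gS.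
  by case/imsetP=> b bc ->; rewrite unfold_in gS; apply: cS.
suff -> : is_chain le (g @: c) = is_chain le c by [].
apply/forall_inP/forall_inP => chc a.
  move=> ac; apply/forall_inP => b bc; rewrite -[le a b]gle -[le b a]gle.
  by have /forall_inP := chc _ (imset_f g ac); apply; apply: imset_f.
case/imsetP=> a' a'c ->; apply/forall_inP => b /imsetP[b' b'c ->]; rewrite !gle.
by have /forall_inP := chc _ a'c; apply.
Qed.

Lemma sd_homeo_pt_act (g : T -> T) t :
  injective g -> (forall a, S (g a) = S a) -> (forall a b, le (g a) (g b) = le a b) ->
  sd_homeo S le (pt_act g t) = fun c => sd_homeo S le t (g @: c).
Proof.
move=> g_inj gS gle; apply: funext => c.
rewrite !sd_homeoE sd_vertex_imset // (card_imset _ g_inj).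
congr (if _ then _ * _ else _).
have minE : minover (g @: c) t = minover c (pt_act g t).
  by rewrite /minover (reindex_inj g_inj); apply: eq_bigl => a; rewrite mem_imset.
have maxE : maxoutside (g @: c) t = maxoutside c (pt_act g t).
  by rewrite /maxoutside (reindex_inj g_inj); apply: eq_bigl => a; rewrite !inE mem_imset.
by rewrite /gap minE maxE.
Qed.

End SdHomeo.

Section Continuity.
Variable R : realType.

Lemma comp_continuous (X Y Z : topologicalType) (f : X -> Y) (g : Y -> Z) :
  continuous f -> continuous g -> continuous (fun x => g (f x)).
Proof. by move=> cf cg x; apply: continuous_comp (cf x) (cg (f x)). Qed.

Lemma continuous_add (X : topologicalType) (f g : X -> R) :
  continuous f -> continuous g -> continuous (fun x => f x + g x).
Proof. by move=> cf cg x; exact: cvgD (cf x) (cg x). Qed.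

Lemma continuous_sub (X : topologicalType) (f g : X -> R) :
  continuous f -> continuous g -> continuous (fun x => f x - g x).
Proof. by move=> cf cg x; exact: cvgB (cf x) (cg x). Qed.

Lemma continuous_mul (X : topologicalType) (f g : X -> R) :
  continuous f -> continuous g -> continuous (fun x => f x * g x).
Proof. by move=> cf cg x; exact: cvgM (cf x) (cg x). Qed.

Lemma continuous_minr (X : topologicalType) (f g : X -> R) :
  continuous f -> continuous g -> continuous (fun x => Order.min (f x) (g x)).
Proof. by move=> cf cg x; exact: continuous_min (cf x) (cg x). Qed.

Lemma continuous_maxr (X : topologicalType) (f g : X -> R) :
  continuous f -> continuous g -> continuous (fun x => Order.max (f x) (g x)).
Proof. by move=> cf cg x; exact: continuous_max (cf x) (cg x). Qed.

Lemma continuous_sum (X : topologicalType) (I : Type) (r : seq I) (P : pred I)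
    (F : I -> X -> R) :
  (forall i, continuous (F i)) -> continuous (fun x => \sum_(i <- r | P i) F i x).
Proof.
by move=> Fc; apply: continuous_big => [|i _]; [apply: add_continuous | apply: Fc].
Qed.

Lemma continuous_ptws (X : topologicalType) (T : Type) (F : X -> rpoint R T) :
  (forall w, continuous (fun x => F x w)) -> continuous F.
Proof.
move=> Fc x; apply/cvg_sup => w U [_ [[W oW <-]] /= Wfx] /filterS; apply.
by apply: (Fc w x); apply: open_nbhs_nbhs.
Qed.

Lemma ptws_proj_continuous (T : eqType) (w : T) : continuous (fun t : rpoint R T => t w).
Proof. exact: (@proj_continuous T (fun=> R) w). Qed.

Lemma fst_continuous (T : Type) : continuous (fun p : R * rpoint R T => p.1).
Proof. by move=> p; apply: cvg_fst. Qed.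

Lemma snd_proj_continuous (T : eqType) (w : T) :
  continuous (fun p : R * rpoint R T => p.2 w).
Proof.
by apply: (comp_continuous _ (ptws_proj_continuous (w := w))) => p; apply: cvg_snd.
Qed.

Lemma realize_continuous (T T' : finType) (f : T -> T') :
  continuous (realize (R:=R) f : rpoint R T -> rpoint R T').
Proof.
by apply: continuous_ptws => w; apply: continuous_sum => a; apply: ptws_proj_continuous.
Qed.

Lemma sd_homeo_continuous (T : finType) (S : pred T) (le : rel T) :
  continuous (sd_homeo (R:=R) S le : rpoint R T -> rpoint R {set T}).
Proof.
apply: continuous_ptws => c; rewrite /sd_homeo.
case: sd_vertex; last exact: cst_continuous.
apply: continuous_mul; first exact: cst_continuous.
apply: continuous_maxr; first exact: cst_continuous.
apply: continuous_sub.
  by apply: continuous_big min_continuous _ _ _ _ => u _; apply: ptws_proj_continuous.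
by apply: continuous_big max_continuous _ _ _ _ => u _; apply: ptws_proj_continuous.
Qed.

End Continuity.

Arguments ptws_proj_continuous {R T} w.
Arguments snd_proj_continuous {R T} w.

Section Homotopy.
Variables (R : realType) (T : finType) (S : pred T) (le : rel T).
Local Notation X := (realization (R:=R) S le).
Implicit Types (t : rpoint R T) (p : R * rpoint R T).

Definition cosupported (u v : T -> R) :=
  forall a b, 0 < u a -> 0 < v b -> le a b || le b a.

Definition supported_below (u v : T -> R) := forall a b, 0 < u a -> 0 < v b -> le a b.

Lemma snd_map_continuous (f : rpoint R T -> rpoint R T) (w : T) :
  continuous f -> continuous (fun p : R * rpoint R T => f p.2 w).
Proof.
move=> fc; have fsnd : continuous (fun p : R * rpoint R T => f p.2).
  by apply: (comp_continuous _ fc) => p; apply: cvg_snd.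
exact: comp_continuous fsnd (ptws_proj_continuous w).
Qed.

Lemma realization_segment t1 t2 s :
  0 <= s <= 1 -> X t1 -> X t2 -> cosupported t1 t2 ->
  X (fun w => (1 - s) * t1 w + s * t2 w).
Proof.
case/andP=> s0 s1 /realizationP[[t10 t1S t1ch] t1_sum].
case/realizationP=> -[t20 t2S t2ch] t2_sum co12.
have s0' : 0 <= 1 - s by rewrite subr_ge0.
have pos_split w : 0 < (1 - s) * t1 w + s * t2 w -> 0 < t1 w \/ 0 < t2 w.
  move=> H; apply/orP; rewrite !lt0r t10 t20 !andbT -negb_and.
  by apply: contraTN H => /andP[/eqP-> /eqP->]; rewrite !mulr0 addr0 ltxx.
apply/realizationP; split; [split|].
- by move=> w; rewrite addr_ge0 ?mulr_ge0.
- by move=> w nSw; rewrite t1S ?t2S // !mulr0 addr0.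
- move=> a b /pos_split[t1a | t2a] /pos_split[t1b | t2b].
  + exact: t1ch.
  + exact: co12.
  + by rewrite orbC; apply: co12.
  + exact: t2ch.
- by rewrite big_split -!mulr_sumr t1_sum t2_sum /=; lra.
Qed.

Lemma equiv_homotopic_segment (Gp : Type) (act : Gp -> T -> T)
    (f : rpoint R T -> rpoint R T) :
  continuous f -> (forall t, X t -> X (f t)) -> (forall t, X t -> cosupported (f t) t) ->
  (forall g t, f (pt_act (act g) t) = pt_act (act g) (f t)) ->
  equiv_homotopic act X f id.
Proof.
move=> fc fX fco fact.
exists (fun p w => (1 - p.1) * f p.2 w + p.1 * p.2 w); split.
- apply: continuous_subspaceT; apply: continuous_ptws => w.
  apply: continuous_add; apply: continuous_mul.
  + by apply: continuous_sub; [exact: cst_continuous | exact: fst_continuous].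
  + exact: snd_map_continuous.
  + exact: fst_continuous.
  + exact: snd_proj_continuous.
- by move=> s t s01 Xt; apply: realization_segment s01 (fX _ Xt) Xt (fco _ Xt).
- by move=> t _; apply: funext => w; rewrite /= subr0 mul1r mul0r addr0.
- by move=> t _; apply: funext => w; rewrite /= subrr mul0r add0r mul1r.
- by move=> g s t _ _; apply: funext => w; rewrite /= fact.
Qed.

Definition mass_above t (o : T) : R := \sum_(x | le o x && (x != o)) t x.

(* [upper_part (s, t)] is the first [s] units of the mass of [t], collected from
   the top of the chain supporting [t] downwards; [lower_part (s, t)] is the rest,
   and it lies below [upper_part (s, t)]. *)
Definition upper_part p : rpoint R T :=
  fun o => Order.min (p.2 o) (Order.max 0 (p.1 - mass_above p.2 o)).

Definition lower_part p : rpoint R T := fun o => p.2 o - upper_part p o.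

Lemma upper_part_le p o : upper_part p o <= p.2 o.
Proof. by rewrite ge_min lexx. Qed.

Lemma upper_part_ge0 p o : 0 <= p.2 o -> 0 <= upper_part p o.
Proof. by move=> p0; rewrite le_min p0 le_max lexx. Qed.

Lemma lower_part_ge0 p o : 0 <= lower_part p o.
Proof. by rewrite subr_ge0 upper_part_le. Qed.

Lemma lower_part_le p o : 0 <= p.2 o -> lower_part p o <= p.2 o.
Proof. by move=> /upper_part_ge0 up0; rewrite gerBl. Qed.

Lemma mass_above_add t o : (forall u, 0 <= t u) -> mass_above t o + t o <= \sum_u t u.
Proof.
move=> t0; rewrite [leRHS](bigD1 o) //= [leLHS]addrC lerD2l.
rewrite [leLHS]big_mkcond [leRHS]big_mkcond.
apply: ler_sum => x _; case: ifP => [/andP[_ ->] // | _].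
by case: ifP => // _; apply: t0.
Qed.

Lemma upper_part0 t : (forall u, 0 <= t u) -> upper_part (0, t) = fun=> 0.
Proof.
move=> t0; apply: funext => o; rewrite /upper_part /= sub0r.
have -> : Order.max 0 (- mass_above t o) = 0.
  by apply/max_idPl; rewrite oppr_le0 sumr_ge0.
exact/min_idPr.
Qed.

Lemma upper_part1 t : X t -> upper_part (1, t) = t.
Proof.
case/realizationP=> -[t0 _ _] t1; apply: funext => o; rewrite /upper_part /=.
have := mass_above_add o t0; rewrite t1 => above_le.
by rewrite (max_idPr _) ?(min_idPl _) //; have := t0 o; lra.
Qed.

Lemma lower_part_below s t : reflexive le -> transitive le ->
  cone S le t -> supported_below (lower_part (s, t)) (upper_part (s, t)).
Proof.
move=> le_refl le_trans [t0 _ tch] o o'.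
rewrite /lower_part /upper_part /= subr_gt0 gt_min ltxx gt_max => /andP[to lt_o].
rewrite lt_min lt_max ltxx => /andP[to' gt_o'].
apply: contraT => no_o'.
have o'o : le o' o by move: (tch o o' to to'); rewrite (negbTE no_o').
have neq : o != o' by apply: contraNneq no_o' => ->.
have : t o + mass_above t o <= mass_above t o'.
  rewrite /mass_above [leRHS](bigD1 o) /=; last by rewrite o'o neq.
  rewrite lerD2l [leLHS]big_mkcond [leRHS]big_mkcond; apply: ler_sum => x _.
  case: ifP => [/andP[ox xo] | _]; last by case: ifP.
  rewrite (le_trans _ _ _ o'o ox) xo andbT.
  by case: eqVneq => // xo'; rewrite -xo' ox in no_o'.
lra.
Qed.

Lemma lower_part_cone s t : cone S le t -> cone S le (lower_part (s, t)).
Proof.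
move=> [t0 tS tch]; split=> [w | w nSw | a b la lb].
- exact: lower_part_ge0.
- by apply/le_anti; rewrite lower_part_ge0 -(tS w nSw) lower_part_le.
- apply: tch; [apply: lt_le_trans la _ | apply: lt_le_trans lb _];
    exact: lower_part_le.
Qed.

Lemma mass_above_comp (g : T -> T) t o : injective g ->
  (forall a b, le (g a) (g b) = le a b) -> mass_above (pt_act g t) o = mass_above t (g o).
Proof.
move=> g_inj gle; rewrite /mass_above [RHS](reindex_inj g_inj).
by apply: eq_bigl => x; rewrite gle (inj_eq g_inj).
Qed.

Lemma upper_part_comp (g : T -> T) s t : injective g ->
  (forall a b, le (g a) (g b) = le a b) ->
  upper_part (s, pt_act g t) = pt_act g (upper_part (s, t)).
Proof.
by move=> g_inj gle; apply: funext => o; rewrite /upper_part /= mass_above_comp.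
Qed.

Lemma lower_part_comp (g : T -> T) s t : injective g ->
  (forall a b, le (g a) (g b) = le a b) ->
  lower_part (s, pt_act g t) = pt_act g (lower_part (s, t)).
Proof. by move=> g_inj gle; apply: funext => o; rewrite /lower_part upper_part_comp. Qed.

Lemma upper_part_continuous : continuous upper_part.
Proof.
apply: continuous_ptws => o; apply: continuous_minr; first exact: snd_proj_continuous.
apply: continuous_maxr; first exact: cst_continuous.
apply: continuous_sub; first exact: fst_continuous.
by apply: continuous_sum => x; apply: snd_proj_continuous.
Qed.

Lemma lower_part_continuous : continuous lower_part.
Proof.
apply: continuous_ptws => o; apply: continuous_sub; first exact: snd_proj_continuous.
exact: comp_continuous upper_part_continuous (ptws_proj_continuous o).
Qed.

Section Lowering.
Variable h : rpoint R T -> rpoint R T.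
Hypotheses (le_refl : reflexive le) (le_trans : transitive le).
Hypothesis h_cone : forall v, cone S le v -> cone S le (h v).
Hypothesis h_sum : forall v, cone S le v -> \sum_w v w <= 1 -> \sum_w h v w = \sum_w v w.
Hypothesis h_below :
  forall v u, cone S le v -> supported_below v u -> supported_below (h v) u.

Lemma lowering0 : h (fun=> 0) = fun=> 0.
Proof.
have c0 : cone S le ((fun=> 0) : rpoint R T) by split=> // a b; rewrite ltxx.
have [h0_ge0 _ _] := h_cone c0.
apply: funext => w; apply: (psumr_eq0P (P := xpredT) (fun u _ => h0_ge0 u)) => //.
by rewrite h_sum // big1 // ler01.
Qed.

Lemma lowering_realization s t :
  X t -> X (fun w => h (lower_part (s, t)) w + upper_part (s, t) w).
Proof.
case/realizationP=> tc t_sum; have [t0 tS tch] := tc.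
have lc := lower_part_cone s tc; have [hl0 hlS hlch] := h_cone lc.
have l_sum : \sum_w lower_part (s, t) w <= 1.
  by rewrite -t_sum; apply: ler_sum => w _; apply: lower_part_le.
have pos_split w : 0 < h (lower_part (s, t)) w + upper_part (s, t) w ->
    0 < h (lower_part (s, t)) w \/ 0 < upper_part (s, t) w.
  move=> H; apply/orP; rewrite !lt0r hl0 upper_part_ge0 // !andbT -negb_and.
  by apply: contraTN H => /andP[/eqP-> /eqP->]; rewrite addr0 ltxx.
have ut a : 0 < upper_part (s, t) a -> 0 < t a.
  by move/lt_le_trans; apply; apply: upper_part_le.
have below := h_below lc (lower_part_below le_refl le_trans tc).
apply/realizationP; split; [split|].
- by move=> w; rewrite addr_ge0 ?upper_part_ge0.
- move=> w nSw; rewrite hlS // add0r; apply/le_anti.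
  by rewrite upper_part_ge0 // -(tS w nSw) upper_part_le.
- move=> a b /pos_split[ha | ua] /pos_split[hb | ub].
  + exact: hlch.
  + by rewrite (below a b).
  + by rewrite (below b a) ?orbT.
  + by apply: tch; apply: ut.
- rewrite big_split /= h_sum // -big_split /= -t_sum.
  by apply: eq_bigr => w _; rewrite /lower_part subrK.
Qed.

Lemma equiv_homotopic_lowering (Gp : Type) (act : Gp -> T -> T) :
  (forall g, injective (act g)) -> (forall g a b, le (act g a) (act g b) = le a b) ->
  continuous h -> (forall g v, h (pt_act (act g) v) = pt_act (act g) (h v)) ->
  equiv_homotopic act X h id.
Proof.
move=> act_inj act_le hc h_act.
exists (fun p w => h (lower_part p) w + upper_part p w); split.
- apply: continuous_subspaceT; apply: continuous_ptws => w; apply: continuous_add.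
    exact: comp_continuous (comp_continuous lower_part_continuous hc)
      (ptws_proj_continuous w).
  exact: comp_continuous upper_part_continuous (ptws_proj_continuous w).
- by move=> s t _; apply: lowering_realization.
- move=> t /realizationP[[t0 _ _] _]; apply: funext => w /=.
  have -> : lower_part (0, t) = t.
    by apply: funext => o; rewrite /lower_part upper_part0 //= subr0.
  by rewrite upper_part0 //= addr0.
- move=> t Xt; apply: funext => w /=.
  have -> : lower_part (1, t) = fun=> 0.
    by apply: funext => o; rewrite /lower_part upper_part1 // subrr.
  by rewrite lowering0 upper_part1 // add0r.
- move=> g s t _ _; apply: funext => w /=.
  rewrite (lower_part_comp s t (act_inj g) (act_le g)).
  by rewrite (upper_part_comp s t (act_inj g) (act_le g)) h_act.
Qed.

End Lowering.

End Homotopy.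

Section DoubleOrderRealizations.
Variables (R : realType) (A : finType).
Implicit Types (t v : rpoint R (dorder A)) (s : {perm A}).
Local Notation regular_pred := (fun o : dorder A => `[< regular o >]).
Local Notation semi_regular_pred := (fun o : dorder A => `[< semi_regular o >]).
Local Notation Fr := (realize (R:=R) (@Fmap A)).
Local Notation Gr t := (realize (R:=R) (@Gmap A) (sd_homeo regular_pred (@dsq A) t)).

Lemma Fr_cone v :
  cone semi_regular_pred (@dsub A) v -> cone regular_pred (@dsq A) (Fr v).
Proof.
apply: realize_cone; first by move=> d /asboolP/Fmap_regular/asboolP.
by move=> d1 d2 /asboolP[d1d _] /asboolP[[_ [spo2 _]] _]; apply: Fmap_mono.
Qed.

Lemma Gr_cone t : cone semi_regular_pred (@dsub A) (Gr t).
Proof.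
apply: realize_cone (sd_homeo_cone _ _ _); last exact: Gmap_mono.
by move=> c /Gmap_semi_regular/asboolP.
Qed.

Lemma Gr_sum t : cone regular_pred (@dsq A) t -> \sum_w t w <= 1 ->
  \sum_w Gr t w = \sum_w t w.
Proof.
by move=> tc t_le1; rewrite realize_sum sd_homeo_sum //; apply: cone_le1 tc t_le1.
Qed.

Lemma Fr_realization t : realization semi_regular_pred (@dsub A) t ->
  realization regular_pred (@dsq A) (Fr t).
Proof.
case/realizationP=> tc t1; apply/realizationP.
by split; [apply: Fr_cone | rewrite realize_sum].
Qed.

Lemma Gr_realization t : realization regular_pred (@dsq A) t ->
  realization semi_regular_pred (@dsub A) (Gr t).
Proof.
case/realizationP=> tc t1; apply/realizationP.
by split; [apply: Gr_cone | rewrite Gr_sum ?t1 ?lexx].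
Qed.

Lemma Gr_continuous : continuous (fun t : rpoint R (dorder A) => Gr t).
Proof.
exact: comp_continuous (sd_homeo_continuous (S := regular_pred) (le := @dsq A))
  (realize_continuous (f := @Gmap A)).
Qed.

Lemma Fr_act s t : Fr (pt_act (dact s) t) = pt_act (dact s) (Fr t).
Proof.
apply: realize_pt_act; [exact: dact_inj | exact: dact_inj |].
by move=> d _; apply: Fmap_act.
Qed.

Lemma Gr_act s t : Gr (pt_act (dact s) t) = pt_act (dact s) (Gr t).
Proof.
have regular_predE d : regular_pred (dact s d) = regular_pred d.
  exact/asbool_equiv_eq/regular_actE.
rewrite (sd_homeo_pt_act t (@dact_inj A s) regular_predE (@dsq_act A s)).
apply: realize_pt_act (imset_inj (@dact_inj A s)) (@dact_inj A s) _ => c c_ne0.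
have /sd_homeo_gt0[+ _] : 0 < sd_homeo regular_pred (@dsq A) t (dact s @: c).
  by rewrite lt0r c_ne0 sd_homeo_ge0.
rewrite (sd_vertex_imset c (@dact_inj A s) regular_predE (@dsq_act A s)).
exact: Gmap_act.
Qed.

Lemma Fr_Gr_cosupported t : realization regular_pred (@dsq A) t ->
  cosupported (@dsq A) (Fr (Gr t)) t.
Proof.
case/realizationP=> -[t0 tS tch] _ a b.
have [Gt0 _ _] := Gr_cone t.
case/(realize_gt0 Gt0) => _ <- /(realize_gt0 (sd_homeo_ge0 _ _ _))[c <-].
case/sd_homeo_gt0=> cv gapc tb.
have rb : regular b by apply/asboolP; apply: contraTT tb => /tS ->; rewrite ltxx.
by apply: Fmap_Gmap_comparable cv rb _ => m mc; apply: tch (gap_gt0_pos gapc mc) tb.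
Qed.

Lemma Gr_Fr_below v u : cone semi_regular_pred (@dsub A) v ->
  supported_below (@dsub A) v u -> supported_below (@dsub A) (Gr (Fr v)) u.
Proof.
move=> [v0 _ _] v_below a b.
case/(realize_gt0 (sd_homeo_ge0 _ _ _)) => c <- /sd_homeo_gt0[cv gapc] ub.
have [tc _] := chain_topP cv; have [bc _] := chain_botP cv.
have [xT xTE vT] := realize_gt0 v0 (gap_gt0_pos gapc tc).
have [xB xBE vB] := realize_gt0 v0 (gap_gt0_pos gapc bc).
have /andP[xT1 _] := v_below _ _ vT ub; have /andP[_ xB2] := v_below _ _ vB ub.
by rewrite /dsub /Gmap -xTE -xBE /= xT1; apply: subset_trans (rdiff_sub _ _) xB2.
Qed.

Lemma Gr_Fr_homotopic_id :
  equiv_homotopic (fun s : {perm A} => dact s^-1)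
    (realization semi_regular_pred (@dsub A)) (fun t => Gr (Fr t)) id.
Proof.
apply: equiv_homotopic_lowering.
- exact: dsub_refl.
- exact: dsub_trans.
- by move=> v _; apply: Gr_cone.
- by move=> v vc v_le1; rewrite Gr_sum ?realize_sum //; apply: Fr_cone.
- exact: Gr_Fr_below.
- by move=> s; apply: dact_inj.
- by move=> s; apply: dsub_act.
- exact: comp_continuous (realize_continuous (f := @Fmap A)) Gr_continuous.
- by move=> s v; rewrite Fr_act Gr_act.
Qed.

Lemma Fr_Gr_homotopic_id :
  equiv_homotopic (fun s : {perm A} => dact s^-1)
    (realization regular_pred (@dsq A)) (fun t => Fr (Gr t)) id.
Proof.
apply: equiv_homotopic_segment.
- exact: comp_continuous Gr_continuous (realize_continuous (f := @Fmap A)).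
- by move=> t /Gr_realization/Fr_realization.
- exact: Fr_Gr_cosupported.
- by move=> s t; rewrite Gr_act Fr_act.
Qed.

End DoubleOrderRealizations.

Local Open Scope classical_set_scope.

Theorem proposition4p8 (R : realType) (A : finType) :
  let RA : pred (dorder A) := fun o => `[< regular o >] in
  let RpA : pred (dorder A) := fun o => `[< semi_regular o >] in
  let sdR := sd_vertex RA (@dsq A) in
  let XR := realization (R:=R) RA (@dsq A) in
  let XRp := realization (R:=R) RpA (@dsub A) in
  (* the vertex action of sigma: v |-> v sigma^-1, so (t.sigma)(v) = t(v sigma^-1) ... *)
  let act := fun s : {perm A} => dact (s^-1)%g in
  (* |F| *)
  let Fr : rpoint R (dorder A) -> rpoint R (dorder A) := realize (R:=R) (@Fmap A) in
  (* |R(A)| ~= |sd R(A)| --|G|--> |R^+(A)| *)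
  let Gr : rpoint R (dorder A) -> rpoint R (dorder A) :=
    fun t => realize (R:=R) (@Gmap A) (sd_homeo RA (@dsq A) t) in
  [/\
    (* F : (R^+(A), \subseteq) -> (R(A), \sqsubseteq) is well defined and order preserving *)
    (forall o : dorder A, semi_regular o -> regular (Fmap o)),
    (forall o1 o2 : dorder A, semi_regular o1 -> semi_regular o2 ->
        dsub o1 o2 -> dsq (Fmap o1) (Fmap o2)),
    (* G : sd(R(A), \sqsubseteq) -> (R^+(A), \subseteq) is well defined and order preserving *)
    (forall c : {set dorder A}, sdR c -> semi_regular (Gmap c)),
    (forall c1 c2 : {set dorder A}, sdR c1 -> sdR c2 -> c1 \subset c2 -> dsub (Gmap c1) (Gmap c2)) &
    (* |F| and |G| o (standard homeo) are mutually inverse equivariant homotopy equivalences *)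
    [/\ (forall t, XRp t -> XR (Fr t)) /\ (forall t, XR t -> XRp (Gr t)),
        cont_on XRp Fr /\ cont_on XR Gr,
        (forall s t, XRp t -> Fr (pt_act (act s) t) = pt_act (act s) (Fr t)) /\
        (forall s t, XR t -> Gr (pt_act (act s) t) = pt_act (act s) (Gr t)),
        equiv_homotopic act XRp (fun t => Gr (Fr t)) id
      & equiv_homotopic act XR (fun t => Fr (Gr t)) id]].
Proof.
move=> RA RpA sdR XR XRp act Fr Gr; split.
- exact: Fmap_regular.
- by move=> d1 d2 [d1d _] [[_ [spo2 _]] _]; apply: Fmap_mono.
- exact: Gmap_semi_regular.
- exact: Gmap_mono.
split.
- by split=> t; [apply: Fr_realization | apply: Gr_realization].
- split; apply: continuous_subspaceT; [exact: realize_continuous | exact: Gr_continuous].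
- by split=> s t _; [apply: Fr_act | apply: Gr_act].
- exact: Gr_Fr_homotopic_id.
- exact: Fr_Gr_homotopic_id.
Qed.
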